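(* Assume the setup below and let $\boldsymbol{\lambda}\in\mathcal{P}(l,n)$. Then the $J$-heart $\tau_{\mathbf{r}}(w(\boldsymbol{\lambda}))_J$ of the partition $\tau_{\mathbf{r}}(w(\boldsymbol{\lambda}))$ is the partition whose ($0$-shifted) $\beta$-number is $\chi(\tilde{\mathbf{C}}(\boldsymbol{\lambda}))$ arranged in decreasing order.
   Context: Fix positive integers $l,n$. A partition $\lambda=(\lambda_1\ge\lambda_2\ge\dots)$ has $\lambda_i=0$ for large $i$; $Y(\lambda)=\{(a,b):a\ge1,1\le b\le\lambda_a\}$; the content of $(a,b)$ is $b-a$. $\mathcal{P}(l,n)$ is the set of $l$-multipartitions $\boldsymbol{\lambda}=(\lambda^{(0)},\dots,\lambda^{(l-1)})$ of $n$. For $r\in\mathbb{Z}$, $\beta^r(\lambda)=(\lambda_i+r+1-i)_{i\ge1}$, $\beta(\lambda)=\beta^0(\lambda)$; a strictly decreasing integer sequence stabilising with respect to $r$ (i.e. $C_i=r+1-i$ for large $i$) is $\beta^r$ of a unique partition. For a strictly decreasing integer sequence $C$, $S^iC=(C_1+i,C_2+i,\dots)$. For an $l$-tuple $\mathbf{C}=(C^0,\dots,C^{l-1})$ of strictly decreasing integer sequences, $\chi(\mathbf{C})=\{l(C^q_i-1)+q+1:0\le q\le l-1,\,i\ge1\}$. A node is removable if deleting it leaves a Young diagram; for $J\subseteq\{0,\dots,l-1\}$ it is $J$-removable if removable with content congruent mod $l$ to some $j\in J$; the $J$-heart $\lambda_J$ is obtained by removing $J$-removable nodes as long as possible. Parameters: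 $H_1,\dots,H_{l-1}\in\mathbb{Q}$, $H_0=-(H_1+\dots+H_{l-1})$, $d$ a positive integer with $dH_i\in\mathbb{Z}$; $\theta=(1+H_0,H_1,\dots,H_{l-1})$. $S_l$ = permutations of $\{0,\dots,l-1\}$ generated by $s_i$ ($1\le i\le l-1$) transposing $i-1,i$, acting on $\mathbb{Q}^l$ by: $s_i\cdot\theta$ has entry $\theta_{i-1}+\theta_i$ at $i-1$, $-\theta_i$ at $i$, $\theta_i+\theta_{i+1}$ at $i+1$, otherwise unchanged (indices mod $l$). $R\subset\mathbb{Z}^l$ is generated by $\alpha_i=-e_{i-1}+2e_i-e_{i+1}$ (indices mod $l$); $\tilde{S}_l=R\rtimes S_l$ acts on $\{\theta\in\mathbb{Q}^l:\sum\theta_i=1\}$ with $R$ by translations; $\mathbb{Z}^l_0$ = integer vectors with coordinate sum $0$; $\phi(\mathbf{r})=\sum_j(r_{j-1}-r_j)e_j$ (indices mod $l$). Fix $w_\theta=\phi(\mathbf{r})w\in\tilde{S}_l$ ($\mathbf{r}\in\mathbb{Z}^l_0$, $w\in S_l$) with $\boldsymbol{\epsilon}=w_\theta\cdot\theta$ satisfying $0\le\varepsilon_i\le1$; $J=\{j:\varepsilon_j=0\}$; then $d\boldsymbol{\epsilon}\in\mathbb{Z}^l$. Let $m_i(\mathbf{c})=c_0+\dots+c_i$ and $I_t=\{p:m_p(d\boldsymbol{\epsilon})=t\}$ for $0\le t\le d$. For $\mathbf{s}\in\mathbb{Z}^l$ with $s=\sum s_i$, $\tau_{\mathbf{s}}(\boldsymbol{\lambda})$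 is the partition whose $s$-shifted $\beta$-number is $\chi(\beta^{s_0}(\lambda^{(0)}),\dots,\beta^{s_{l-1}}(\lambda^{(l-1)}))$ arranged decreasingly; $w(\boldsymbol{\lambda})$ has $p$-th component $\lambda^{(w^{-1}(p))}$. Put $C^p(\boldsymbol{\lambda})=\beta^{r_p}(\lambda^{(w^{-1}(p))})$; for $1\le t\le d-1$, $C_{[t]}=\biguplus_{p\in I_t}C^p$ (multiset union) and $C_{[0]}=C_{[d]}=\biguplus_{p\in I_0}S^{-1}C^p\uplus\biguplus_{p\in I_d}C^p$. $\tilde{\mathbf{C}}(\boldsymbol{\lambda})=(\tilde{C}^0,\dots,\tilde{C}^{l-1})$ is the unique $l$-tuple of strictly decreasing integer sequences with $\tilde{C}_{[t]}=C_{[t]}(\boldsymbol{\lambda})$ for all $0\le t\le d$ (same recipe), $\tilde{C}^p\subseteq\tilde{C}^{p-1}$ for all $0\ne p\in J$, and $S^{-1}\tilde{C}^0\subseteq\tilde{C}^{l-1}$ if $0\in I_0$. *)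

From HB Require Import structures.
From mathcomp Require Import all_boot all_order all_algebra.
From Stdlib Require Import ClassicalEpsilon Relation_Operators.
Set Implicit Arguments. Unset Strict Implicit. Unset Printing Implicit Defensive.
Import Order.TTheory GRing.Theory Num.Theory.
Local Open Scope ring_scope.

(* A partition is encoded by the seq of its nonzero parts, weakly decreasing.
   lambda_i (1-based) is  nth 0 lam (i-1). *)
Definition is_part (lam : seq nat) : bool :=
  sorted (fun a b : nat => (b <= a)%N) lam && (0%N \notin lam).

Definition inY (lam : seq nat) (a b : nat) : bool :=
  [&& (1 <= a)%N, (1 <= b)%N & (b <= nth 0%N lam a.-1)%N].

(* Strictly decreasing integer sequences are encoded as functions nat -> int,
   0-based: the paper's C_i is  C (i-1). *)
Definition strictly_decr (C : nat -> int) : Prop := forall k, C k.+1 < C k.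

Definition memZ (C : nat -> int) (x : int) : Prop := exists k, C k = x.
Definition membZ (C : nat -> int) (x : int) : bool :=
  if excluded_middle_informative (memZ C x) then true else false.

(* beta^r(lambda) = (lambda_i + r + 1 - i)_{i>=1}, 0-based. *)
Definition betar (r : int) (lam : seq nat) : nat -> int :=
  fun k => (nth 0%N lam k)%:Z + r - k%:Z.

(* The (r-shifted) beta-number of nu, arranged decreasingly, equals a given
   set S iff the set of its terms is S (beta^r(nu) is strictly decreasing). *)
Definition beta_set (r : int) (nu : seq nat) (x : int) : Prop :=
  memZ (betar r nu) x.

Definition chi (l : nat) (C : 'I_l -> nat -> int) (x : int) : Prop :=
  exists (q : 'I_l) (k : nat), x = l%:Z * (C q k - 1) + q%:Z + 1.

Definition content_in (l : nat) (J : pred 'I_l) (a b : nat) : Prop :=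
  exists j : 'I_l, J j /\ (l%:Z %| (b%:Z - a%:Z - j%:Z))%Z.

Definition J_step (l : nat) (J : pred 'I_l) (lam mu : seq nat) : Prop :=
  is_part mu /\
  exists a b, inY lam a b /\ content_in J a b /\
    (forall a' b', inY mu a' b' <-> (inY lam a' b' /\ (a', b') <> (a, b))).

Definition is_J_heart (l : nat) (J : pred 'I_l) (lam mu : seq nat) : Prop :=
  clos_refl_trans (seq nat) (J_step J) lam mu /\ ~ (exists nu, J_step J mu nu).

(* alpha_i = -e_{i-1} + 2 e_i - e_{i+1}, indices mod l (entries added). *)
Definition alpha (l : nat) (i : 'I_l) : 'I_l -> int :=
  fun j => 2%:Z * (j == i)%:Z - (j == ord_pred i)%:Z - (j == ordS i)%:Z.

(* s_i . theta = theta - theta_i alpha_i  (this is the stated formula: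
   -theta_i at i, theta_{i-1}+theta_i at i-1, theta_i+theta_{i+1} at i+1). *)
Definition sact (l : nat) (i : 'I_l) (th : 'I_l -> rat) : 'I_l -> rat :=
  fun j => th j - th i * (alpha i j)%:~R.

(* An element w of S_l is given by a word ws = [i1; ...; ik] in the
   generators s_i (1 <= i <= l-1): w = s_{i1} ... s_{ik}. *)
Definition word_act (l : nat) (ws : seq 'I_l) (th : 'I_l -> rat) :=
  foldr (@sact l) th ws.

Definition transp (l : nat) (i q : 'I_l) : 'I_l :=
  if q == i then ord_pred i else if q == ord_pred i then i else q.

(* w^{-1}(p) = s_{ik} ( ... (s_{i1} p)). *)
Definition word_inv (l : nat) (ws : seq 'I_l) (p : 'I_l) : 'I_l :=
  foldl (fun q i => transp i q) p ws.

Definition phi (l : nat) (r : 'I_l -> int) : 'I_l -> int :=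
  fun j => r (ord_pred j) - r j.

Definition theta (l : nat) (H : 'I_l -> rat) : 'I_l -> rat :=
  fun j => if (j == 0 :> nat) then 1 + H j else H j.

(* epsilon = w_theta . theta = phi(r) + w . theta. *)
Definition eps (l : nat) (H : 'I_l -> rat) (r : 'I_l -> int) (ws : seq 'I_l)
  : 'I_l -> rat :=
  fun j => word_act ws (theta H) j + (phi r j)%:~R.

Definition mpart (l d : nat) (e : 'I_l -> rat) (p : 'I_l) : rat :=
  \sum_(i : 'I_l | (i <= p)%N) d%:R * e i.

(* Multiplicity of x in C_[t] (same recipe for any l-tuple C). *)
Definition multC (l d : nat) (e : 'I_l -> rat) (C : 'I_l -> nat -> int)
  (t : nat) (x : int) : nat :=
  if (0 < t < d)%N then
    (\sum_(p : 'I_l | mpart d e p == (t%:R : rat)) membZ (C p) x)%N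
  else
    (\sum_(p : 'I_l | mpart d e p == (0 : rat)) membZ (C p) (x + 1) +
     \sum_(p : 'I_l | mpart d e p == (d%:R : rat)) membZ (C p) x)%N.

Definition Cseq (l : nat) (r : 'I_l -> int) (ws : seq 'I_l)
  (lam : 'I_l -> seq nat) : 'I_l -> nat -> int :=
  fun p => betar (r p) (lam (word_inv ws p)).

Definition Ctilde_spec (l d : nat) (e : 'I_l -> rat) (C Ct : 'I_l -> nat -> int)
  : Prop :=
  (forall q, strictly_decr (Ct q)) /\
  (forall t, (t <= d)%N -> forall x, multC d e Ct t x = multC d e C t x) /\
  (forall p : 'I_l, (p != 0 :> nat) -> e p = 0 ->
     forall x, memZ (Ct p) x -> memZ (Ct (ord_pred p)) x) /\
  (forall p0 q : 'I_l, (p0 == 0 :> nat) -> (q == l.-1 :> nat) ->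
     mpart d e p0 = 0 ->
     forall x, memZ (Ct p0) (x + 1) -> memZ (Ct q) x).

(* Write l = m.+1.  The integer x sits on runner q at level c of the l-runner
   abacus when x = l (c - 1) + q + 1; in these coordinates chi(C) is the
   abacus whose runner q carries the beads C^q.  Removing a J-removable node
   of a partition mu moves a bead of its beta-set from x to the free position
   x - 1 whose residue j satisfies e_j = 0, i.e. from runner j to runner j-1
   at the same level (dropping one level when j = 0).
   Read runner p at the level shifted by [m_p(de) = 0] and group the runners
   into classes by the value of m_p(de), with 0 and d identified.  A bead move
   then stays inside a class and keeps the shifted level, so the number of
   beads of each class at each level (the multisets C_[t]) is invariant.
   Inside a class the runners form a chain along which beads can move, and
   no move is possible exactly when the runners of each class are nested;
   nested families with the same class counts coincide.  The J-heart is the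
   configuration in which no move is possible, whence the theorem. *)
From HB Require Import structures.
From mathcomp Require Import all_boot all_order all_algebra.
From Stdlib Require Import ClassicalEpsilon Relation_Operators Operators_Properties.
Set Implicit Arguments. Unset Strict Implicit. Unset Printing Implicit Defensive.
Import Order.TTheory GRing.Theory Num.Theory.
Local Open Scope ring_scope.

Definition bP (P : Prop) : bool :=
  if excluded_middle_informative P then true else false.

Lemma bPP (P : Prop) : reflect P (bP P).
Proof. by rewrite /bP; case: excluded_middle_informative => h; constructor. Qed.

Lemma bP_iff (P Q : Prop) : (P <-> Q) -> bP P = bP Q.
Proof. by move=> h; apply/bPP/bPP => /h. Qed.

Lemma ltz_sub1 (y : int) : y - 1 < y.
Proof. by rewrite ltrBlDr ltrDl. Qed.

Lemma ltz_le1 (a b : int) : a < b -> a <= b - 1.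
Proof. by move=> h; rewrite lerBrDr lezD1. Qed.

Lemma predz (n : nat) : (0 < n)%N -> (n.-1)%:Z = n%:Z - 1.
Proof. by case: n => // n _ /=; rewrite -[n.+1]addn1 PoszD addrK. Qed.

Section Abacus.

Variable m : nat.

Definition abacus_pos (q : 'I_m.+1) (c : int) : int :=
  m.+1%:Z * (c - 1) + q%:Z + 1.

Definition residue (y : int) : 'I_m.+1 := inord `|(y %% m.+1%:Z)%Z|%N.

Lemma residue_val (y : int) : (residue y : nat)%:Z = (y %% m.+1%:Z)%Z.
Proof.
rewrite /residue inordK; last by rewrite -ltz_nat gez0_abs ?modz_ge0 // ltz_pmod.
by rewrite gez0_abs ?modz_ge0.
Qed.

Lemma residue_dvd (y : int) : (m.+1%:Z %| y - (residue y : nat)%:Z)%Z.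
Proof. by rewrite residue_val {1}(divz_eq y m.+1%:Z) addrK dvdz_mull. Qed.

Lemma residue_of_dvd (y : int) (j : 'I_m.+1) :
  (m.+1%:Z %| y - j%:Z)%Z -> residue y = j.
Proof.
move=> h; apply: ord_inj; apply/eqP; rewrite -eqz_nat residue_val.
have /eqP -> : (y == j%:Z %[mod m.+1%:Z])%Z by rewrite eqz_mod_dvd.
by rewrite modz_small // lez_nat ltz_nat /= ltn_ord.
Qed.

Lemma residue_pos q c : residue (abacus_pos q c - 1) = q.
Proof.
apply: residue_of_dvd; rewrite /abacus_pos !addrK.
by apply: dvdz_mulr.
Qed.

Lemma abacus_pos_inj q q' c c' :
  abacus_pos q c = abacus_pos q' c' -> q = q' /\ c = c'.
Proof.
move=> E; have Eq : q = q' by rewrite -(residue_pos q c) -(residue_pos q' c') E.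
split=> //; subst q'.
move: E; rewrite /abacus_pos => /addIr /addIr /mulfI h.
by apply: (addIr (-1)); apply: h.
Qed.

Lemma abacus_posE (x : int) :
  x = abacus_pos (residue (x - 1)) (((x - 1) %/ m.+1%:Z)%Z + 1).
Proof. by rewrite /abacus_pos residue_val addrK mulrC -divz_eq subrK. Qed.

Lemma abacus_pos_le q c : abacus_pos q c <= m.+1%:Z * c.
Proof.
rewrite /abacus_pos -addrA mulrBr mulr1 -addrA gerDl addrC subr_le0.
have : (q : nat).+1%:Z <= m.+1%:Z by rewrite lez_nat ltn_ord.
by rewrite -[(q : nat).+1]addn1 PoszD.
Qed.

Definition runner (X : int -> Prop) (p : 'I_m.+1) (c : int) : Prop :=
  X (abacus_pos p c).

Lemma runnersE (X : int -> Prop) (S : 'I_m.+1 -> int -> Prop) :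
  (forall q c, runner X q c <-> S q c) ->
  forall x, X x <-> exists q c, S q c /\ x = abacus_pos q c.
Proof.
move=> h x; split; last by move=> [q [c [hs ->]]]; apply/h.
move=> hx; exists (residue (x - 1)), (((x - 1) %/ m.+1%:Z)%Z + 1).
by rewrite -h /runner -abacus_posE.
Qed.

Lemma chiE (C : 'I_m.+1 -> nat -> int) x :
  chi C x <-> exists q c, memZ (C q) c /\ x = abacus_pos q c.
Proof.
split; first by move=> [q [k ->]]; exists q, (C q k); split=> //; exists k.
by move=> [q [c [[k <-] ->]]]; exists q, k.
Qed.

Lemma runner_chi (C : 'I_m.+1 -> nat -> int) p c :
  runner (chi C) p c <-> memZ (C p) c.
Proof.
rewrite /runner chiE; split; last by move=> h; exists p, c.
by move=> [q [c' [h /abacus_pos_inj [-> ->]]]].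
Qed.

End Abacus.

Section WeightVector.

Variable m : nat.

Lemma sum_indicator (a : 'I_m.+1) : \sum_(j : 'I_m.+1) ((j == a)%:Z : int) = 1.
Proof. by rewrite (bigD1 a) //= eqxx big1 ?addr0 // => j /negbTE ->. Qed.

Lemma sum_sact (i : 'I_m.+1) th : \sum_j sact i th j = \sum_j th j.
Proof.
have alpha0 : \sum_j ((alpha i j)%:~R : rat) = 0.
  by rewrite -rmorph_sum /alpha !sumrB -mulr_sumr !sum_indicator.
by rewrite /sact sumrB -mulr_sumr alpha0 mulr0 subr0.
Qed.

Lemma sum_phi (r : 'I_m.+1 -> int) : \sum_j phi r j = 0.
Proof.
rewrite /phi sumrB [X in X - _](reindex_inj (@ordS_inj m.+1)) /=.
by rewrite (eq_bigr r) ?subrr // => i _; rewrite ordSK.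
Qed.

Lemma sum_theta (H : 'I_m.+1 -> rat) : \sum_j H j = 0 -> \sum_j theta H j = 1.
Proof.
move=> h0; rewrite (bigD1 ord0) //= /theta /= -addrA.
rewrite (eq_bigr H); last by move=> j; rewrite -val_eqE /= => /negbTE ->.
by move: h0; rewrite (bigD1 ord0) //= => ->; rewrite addr0.
Qed.

Lemma sum_eps (H : 'I_m.+1 -> rat) r ws :
  \sum_j H j = 0 -> \sum_j eps H r ws j = 1.
Proof.
move=> h0; rewrite /eps big_split /= -rmorph_sum sum_phi addr0.
elim: ws => [|i ws IH] /=; [exact: sum_theta | by rewrite sum_sact].
Qed.

(* d * theta has integer entries, since H_0 = - (H_1 + ... + H_{l-1}). *)
Lemma int_theta (H : 'I_m.+1 -> rat) (d : nat) : \sum_j H j = 0 ->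
  (forall i : 'I_m.+1, (i != 0 :> nat) -> exists z : int, d%:R * H i = z%:~R) ->
  forall j, d%:R * theta H j \is a Num.int.
Proof.
move=> h0 hd j.
have hi (i : 'I_m.+1) : (i != 0 :> nat) -> d%:R * H i \is a Num.int.
  by move=> /hd [z ->]; apply/intrP; exists z.
rewrite /theta; case: ifP => [j0|/negbT]; last exact: hi.
have -> : H j = - \sum_(i | i != j) H i.
  by move: h0; rewrite (bigD1 j) //= => /eqP; rewrite addr_eq0 => /eqP.
rewrite mulrDr mulr1 rpredD ?rpred_nat // mulrN rpredN mulr_sumr rpred_sum //.
move=> i hij; apply: hi; apply: contra hij => /eqP hi0.
by apply/eqP/val_inj; rewrite /= hi0 (eqP j0).
Qed.

Lemma int_eps (H : 'I_m.+1 -> rat) r ws (d : nat) : \sum_j H j = 0 ->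
  (forall i : 'I_m.+1, (i != 0 :> nat) -> exists z : int, d%:R * H i = z%:~R) ->
  forall j, d%:R * eps H r ws j \is a Num.int.
Proof.
move=> h0 hd j; rewrite /eps mulrDr rpredD //; last first.
  by rewrite rpredM ?rpred_nat ?rpred_int.
elim: ws j => [|i ws IH] j /=; first exact: int_theta.
by rewrite /sact mulrBr rpredB // mulrA rpredM ?rpred_int.
Qed.

End WeightVector.

Definition admissible (m d : nat) (e : 'I_m.+1 -> rat) :=
  [/\ (0 < d)%N, (forall j, 0 <= e j), \sum_j e j = 1 &
      (forall j, d%:R * e j \is a Num.int)].

Lemma ord_pred_val n (i : 'I_n.+1) :
  (ord_pred i : nat) = if (i : nat) == 0%N then n else (i : nat).-1.
Proof.
case: i => [[|i] hi] /=; first by rewrite modn_small.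
by rewrite modnDr modn_small // ltnW.
Qed.

Lemma iter_pred_val n (i : 'I_n.+1) k : (k <= i)%N ->
  (iter k (@ord_pred _) i : nat) = (i - k)%N.
Proof.
elim: k => [|k IH] hk; first by rewrite subn0.
rewrite iterS ord_pred_val IH ?(ltnW hk) //.
by rewrite subn_eq0 leqNgt hk subnS.
Qed.

Section PartialSums.

Variables (m d : nat) (e : 'I_m.+1 -> rat).
Hypothesis he : admissible d e.

Definition segsum (n : nat) : rat := \sum_(0 <= k < n) d%:R * e (inord k).

Lemma mpart_seg p : mpart d e p = segsum p.+1.
Proof.
rewrite /mpart (eq_bigr (fun i : 'I_m.+1 => d%:R * e (inord i))); last first.
  by move=> i _; rewrite inord_val.
rewrite -(big_mkord (fun i => i <= p)%N (fun i => d%:R * e (inord i))).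
by rewrite /segsum (big_nat_widen 0 p.+1 m.+1).
Qed.

Lemma de_ge0 k : 0 <= d%:R * e (inord k).
Proof. by case: he => _ he0 _ _; rewrite mulr_ge0 ?ler0n. Qed.

Lemma segsum_split n1 n2 : (n1 <= n2)%N ->
  segsum n2 = segsum n1 + \sum_(n1 <= k < n2) d%:R * e (inord k).
Proof. by move=> h; rewrite /segsum (big_cat_nat (leq0n n1) h). Qed.

Lemma segsum_mono n1 n2 : (n1 <= n2)%N -> segsum n1 <= segsum n2.
Proof. by move=> h; rewrite (segsum_split h) lerDl sumr_ge0 // => k _; exact: de_ge0. Qed.

Lemma segsum_const n1 n2 : (n1 <= n2)%N -> segsum n1 = segsum n2 ->
  forall k, (n1 <= k < n2)%N -> e (inord k) = 0.
Proof.
move=> h12; rewrite (segsum_split h12) => /eqP.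
rewrite addrC -subr_eq subrr eq_sym big_nat psumr_eq0 => [/allP hz k hk|k _].
  have /hz /= /implyP /(_ hk) : k \in index_iota n1 n2 by rewrite mem_index_iota.
  case: he => hd _ _ _; rewrite mulf_eq0 pnatr_eq0 => /orP [/eqP d0|/eqP //].
  by rewrite d0 in hd.
exact: de_ge0.
Qed.

Lemma segsum_full : segsum m.+1 = d%:R.
Proof.
case: he => _ _ hs _; rewrite /segsum big_mkord -mulr_sumr.
by rewrite (eq_bigr e) ?hs ?mulr1 // => i _; rewrite inord_val.
Qed.

Lemma d_neq0 : (d%:R : rat) != 0.
Proof. by case: he => hd _ _ _; rewrite pnatr_eq0 -lt0n. Qed.

Lemma mpart_pred (p : 'I_m.+1) : (p != 0 :> nat) ->
  mpart d e p = mpart d e (ord_pred p) + d%:R * e p.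
Proof.
move=> hp; rewrite !mpart_seg ord_pred_val (negbTE hp) /segsum.
rewrite big_nat_recr //= inord_val; congr (_ + _).
by case: (val p) hp.
Qed.

Lemma mpart_zero (p : 'I_m.+1) : (p == 0 :> nat) -> mpart d e p = d%:R * e p.
Proof.
move=> hp; rewrite mpart_seg /segsum (eqP hp) big_nat1.
by congr (_ * e _); apply: val_inj; rewrite /= inordK // (eqP hp).
Qed.

Lemma mpart_max (p : 'I_m.+1) : (p == m :> nat) -> mpart d e p = d%:R.
Proof. by move=> hp; rewrite mpart_seg (eqP hp) segsum_full. Qed.

Lemma mpart_mono (p p' : 'I_m.+1) : (p <= p')%N -> mpart d e p <= mpart d e p'.
Proof. by move=> h; rewrite !mpart_seg segsum_mono. Qed.

Lemma mpart_nat p : exists t, (t <= d)%N /\ mpart d e p = t%:R.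
Proof.
have hge : 0 <= mpart d e p.
  by rewrite mpart_seg /segsum sumr_ge0 // => k _; exact: de_ge0.
have hle : mpart d e p <= d%:R by rewrite mpart_seg -segsum_full segsum_mono.
have hint : mpart d e p \is a Num.int by case: he => _ _ _ hi; rewrite rpred_sum.
have /natrP [t ht] : mpart d e p \is a Num.nat by rewrite natrEint hint hge.
by exists t; split=> //; rewrite -(ler_nat rat) -ht.
Qed.

End PartialSums.

Section RunnerClasses.

Variables (m d : nat) (e : 'I_m.+1 -> rat).
Hypothesis he : admissible d e.

(* Runners with m_p(de) = 0 are read one level lower: C_[0] uses S^-1 C^p. *)
Definition level_shift (p : 'I_m.+1) : int := (mpart d e p == 0)%:Z.

Definition runner_class (p : 'I_m.+1) : rat :=
  if mpart d e p == 0 then d%:R else mpart d e p.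

Lemma runner_class_nat p :
  exists t, (t <= d)%N /\ runner_class p = (if t == 0%N then d else t)%:R.
Proof.
have [t [ht hm]] := mpart_nat he p; exists t; split=> //.
by rewrite /runner_class hm pnatr_eq0; case: (t == 0%N).
Qed.

Lemma runner_class_pred p : e p = 0 -> runner_class (ord_pred p) = runner_class p.
Proof.
move=> ep; case: (boolP (p == 0 :> nat)) => hp.
  rewrite /runner_class (mpart_zero d e hp) ep mulr0 eqxx.
  by rewrite mpart_max ?ord_pred_val ?hp // (negbTE (d_neq0 he)).
by rewrite /runner_class (mpart_pred d e hp) ep mulr0 addr0.
Qed.

Lemma level_shift_pred p : e p = 0 -> (p != 0 :> nat) ->
  level_shift (ord_pred p) = level_shift p.
Proof. by move=> ep hp; rewrite /level_shift (mpart_pred d e hp) ep mulr0 addr0. Qed.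

Lemma level_shift_wrap p : e p = 0 -> (p == 0 :> nat) ->
  level_shift p = 1 /\ level_shift (ord_pred p) = 0.
Proof.
move=> ep hp; rewrite /level_shift (mpart_zero d e hp) ep mulr0 eqxx.
by rewrite mpart_max ?ord_pred_val ?hp // (negbTE (d_neq0 he)).
Qed.

Lemma abacus_pos_pred q y : e q = 0 ->
  abacus_pos q (y + level_shift q) - 1 =
  abacus_pos (ord_pred q) (y + level_shift (ord_pred q)).
Proof.
move=> eq0; case: (boolP (q == 0 :> nat)) => hq.
  have [-> ->] := level_shift_wrap eq0 hq.
  rewrite /abacus_pos ord_pred_val hq (eqP hq) addr0 addrK addr0 addrK.
  have -> : (m.+1 : int) = m%:Z + 1 by rewrite -[m.+1]addn1 PoszD.
  by rewrite mulrBr mulr1 -addrA subrK.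
rewrite (level_shift_pred eq0 hq) /abacus_pos ord_pred_val (negbTE hq) addrK.
rewrite -[RHS]addrA; congr (_ + _); case: (nat_of_ord q) hq => // k _ /=.
by rewrite -[k.+1]addn1 PoszD.
Qed.

Definition zero_path (p p' : 'I_m.+1) :=
  exists n, iter n (@ord_pred _) p = p' /\
    forall i, (i < n)%N -> e (iter i (@ord_pred _) p) = 0.

Lemma zero_path_trans p1 p2 p3 :
  zero_path p1 p2 -> zero_path p2 p3 -> zero_path p1 p3.
Proof.
move=> [n1 [h1 h1']] [n2 [h2 h2']]; exists (n2 + n1)%N; split.
  by rewrite iterD h1.
move=> i hi; case: (ltnP i n1) => hin; first exact: h1'.
by rewrite -(subnK hin) iterD h1 h2' // ltn_subLR // addnC.
Qed.

Lemma zero_path_down (p p' : 'I_m.+1) : (p' <= p)%N ->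
  (forall k, (p' < k <= p)%N -> e (inord k) = 0) -> zero_path p p'.
Proof.
move=> hle hz; exists (p - p')%N; split.
  by apply: ord_inj; rewrite iter_pred_val ?leq_subr // subKn.
move=> i hi; have hip : (i <= p)%N by apply: leq_trans (ltnW hi) (leq_subr _ _).
have -> : iter i (@ord_pred _) p = inord (p - i).
  apply: ord_inj; rewrite iter_pred_val // inordK //.
  by rewrite ltnS (leq_trans (leq_subr _ _)) // -ltnS.
by apply: hz; rewrite leq_subr andbT ltn_subRL addnC -ltn_subRL.
Qed.

Lemma zero_path_wrap (p p' : 'I_m.+1) : (p <= p')%N ->
  mpart d e p = 0 -> mpart d e p' = d%:R -> zero_path p p'.
Proof.
move=> hpp h0 hd.
have z1 k : (k < p.+1)%N -> e (inord k) = 0.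
  move=> hk; apply: (segsum_const he (n1 := 0) (n2 := p.+1)) => //.
  by rewrite -mpart_seg h0 /segsum big_geq.
have z2 k : (p'.+1 <= k < m.+1)%N -> e (inord k) = 0.
  apply: (segsum_const he (n1 := p'.+1)) => //.
  by rewrite -mpart_seg hd segsum_full.
have to0 : zero_path p ord0 by apply: zero_path_down => // k /andP [_ hk]; apply: z1.
have wrap : zero_path ord0 ord_max.
  have -> : (ord_max : 'I_m.+1) = ord_pred ord0 by apply: ord_inj; rewrite ord_pred_val.
  exists 1%N; split=> // -[|] // _; have := z1 0%N (ltn0Sn _).
  by have -> : (inord 0 : 'I_m.+1) = ord0 by apply: val_inj; rewrite /= inordK.
apply: (zero_path_trans to0); apply: (zero_path_trans wrap).
apply: zero_path_down; first by rewrite /= -ltnS.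
by move=> k /andP [hk1 hk2]; apply: z2; rewrite hk1 ltnS.
Qed.

Lemma class_chain (p p' : 'I_m.+1) :
  runner_class p = runner_class p' -> zero_path p p' \/ zero_path p' p.
Proof.
wlog hpp : p p' / (p <= p')%N.
  move=> W hk; case: (leqP p p') => h; first exact: W.
  by case: (W p' p (ltnW h) (esym hk)) => ?; [right|left].
move=> hk; case E: (mpart d e p == mpart d e p').
  right; apply: zero_path_down => // k /andP [hk1 hk2].
  apply: (segsum_const he (n1 := p.+1) (n2 := p'.+1)) => //.
    by rewrite -!mpart_seg (eqP E).
  by rewrite hk1 ltnS.
have [h0 hd] : mpart d e p = 0 /\ mpart d e p' = d%:R.
  move: hk; rewrite /runner_class.
  case: (boolP (mpart d e p == 0)) => h1; case: (boolP (mpart d e p' == 0)) => h2.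
  - by rewrite (eqP h1) (eqP h2) eqxx in E.
  - by move=> ->; rewrite (eqP h1).
  - move=> hh; have := mpart_mono he hpp; rewrite (eqP h2) hh.
    by case: he => hd _ _ _; rewrite leNgt ltr0n hd.
  - by move=> hh; rewrite hh eqxx in E.
by left; apply: zero_path_wrap.
Qed.

End RunnerClasses.

Section ClassCounts.

Variables (m d : nat) (e : 'I_m.+1 -> rat).
Hypothesis he : admissible d e.

Definition shifted (S : 'I_m.+1 -> int -> Prop) p y : Prop :=
  S p (y + level_shift d e p).

(* The set of runners of class k carrying a bead at shifted level y; its
   cardinality is the multiplicity of y in the multiset C_[k]. *)
Definition class_set (S : 'I_m.+1 -> int -> Prop) (k : rat) (y : int) :=
  [set q | (runner_class d e q == k) && bP (shifted S q y)].

Definition class_count (S : 'I_m.+1 -> int -> Prop) (k : rat) (y : int) : nat :=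
  (\sum_(p | runner_class d e p == k) bP (shifted S p y))%N.

Lemma class_countE S k y : class_count S k y = #|class_set S k y|.
Proof.
rewrite -sum1_card big_mkcond [LHS]big_mkcond /=; apply: eq_bigr => x _.
by rewrite inE; case: (_ == k); case: bP.
Qed.

Lemma class_count_ext S S' : (forall p c, S p c <-> S' p c) ->
  forall k y, class_count S k y = class_count S' k y.
Proof.
move=> h k y; apply: eq_bigr => p _; congr (nat_of_bool _); apply: bP_iff.
exact: h.
Qed.

(* No bead can move: along a runner of weight zero the next runner of the
   class carries every shifted level the current one carries. *)
Definition nested (S : 'I_m.+1 -> int -> Prop) :=
  forall p y, e p = 0 -> shifted S p y -> shifted S (ord_pred p) y.

Lemma nested_zero_path S p p' y :
  nested S -> zero_path e p p' -> shifted S p y -> shifted S p' y.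
Proof.
move=> hS [n [<- hz]]; elim: n hz => [|n IH] hz // hp.
by rewrite iterS; apply: hS; [exact: hz | apply: IH => // i /ltnW; exact: hz].
Qed.

Lemma class_set_comparable S S' k y : nested S -> nested S' ->
  class_set S k y \subset class_set S' k y \/ class_set S' k y \subset class_set S k y.
Proof.
move=> hS hS'; case: (boolP (class_set S k y \subset _)) => h; [by left|right].
move: h => /subsetPn [a ha hna]; apply/subsetP => b hb.
case: (boolP (b \in class_set S k y)) => // hnb.
move: ha hna hb hnb; rewrite !inE => /andP [ka /bPP Sa] hna /andP [kb /bPP Sb] hnb.
have : runner_class d e a = runner_class d e b by rewrite (eqP ka) (eqP kb).
case/(class_chain he) => hab.
- by rewrite kb (introT (bPP _) (nested_zero_path hS hab Sa)) in hnb.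
- by rewrite ka (introT (bPP _) (nested_zero_path hS' hab Sb)) in hna.
Qed.

Lemma nested_unique S S' : nested S -> nested S' ->
  (forall p y, class_count S (runner_class d e p) y =
               class_count S' (runner_class d e p) y) ->
  forall p c, S p c <-> S' p c.
Proof.
move=> hS hS' hc p c.
set k := runner_class d e p; set y := c - level_shift d e p.
have card : #|class_set S k y| = #|class_set S' k y| by rewrite -!class_countE hc.
have E : class_set S k y = class_set S' k y.
  case: (class_set_comparable k y hS hS') => sub; apply/eqP.
    by rewrite eqEcard sub card leqnn.
  by rewrite eq_sym eqEcard sub card leqnn.
have : (p \in class_set S k y) = (p \in class_set S' k y) by rewrite E.
rewrite !inE eqxx /= => hb.
have : shifted S p y <-> shifted S' p y.
  by split=> h; apply/bPP; [rewrite -hb | rewrite hb]; apply/bPP.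
by rewrite /shifted /y subrK.
Qed.

End ClassCounts.

Lemma big_pair_eq (I : finType) (P : pred I) (f g : I -> nat) (a b : I) n :
  a != b -> P a -> P b -> (forall i, P i -> i != a -> i != b -> f i = g i) ->
  (f a + f b = g a + g b + n)%N ->
  (\sum_(i | P i) f i = \sum_(i | P i) g i + n)%N.
Proof.
move=> hab Pa Pb hfg hab'.
rewrite (bigD1 a) // [in RHS](bigD1 a) //= (bigD1 b) /=; last by rewrite Pb eq_sym.
rewrite [in RHS](bigD1 b) /=; last by rewrite Pb eq_sym.
rewrite (eq_bigr g) => [|i /andP [/andP [Pi hia] hib]]; last exact: hfg.
by rewrite !addnA hab' addnAC.
Qed.

Section BeadMoves.

Variables (m d : nat) (e : 'I_m.+1 -> rat).
Hypothesis he : admissible d e.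

(* Some bead x of X has a free position x - 1 whose residue has weight 0
   (this is a J-removable node, see below). *)
Definition bead_movable (X : int -> Prop) :=
  exists x, X x /\ ~ X (x - 1) /\ e (residue m (x - 1)) = 0.

Definition bead_move (X X' : int -> Prop) :=
  exists x, X x /\ ~ X (x - 1) /\ e (residue m (x - 1)) = 0 /\
    (forall z, X' z <-> (X z /\ z <> x) \/ z = x - 1).

Lemma shifted_pos_inj p p' y y' :
  abacus_pos p (y + level_shift d e p) = abacus_pos p' (y' + level_shift d e p') ->
  p = p' /\ y = y'.
Proof. by move=> /abacus_pos_inj [hp hc]; subst p'; split=> //; move: hc => /addIr. Qed.

Lemma bead_move_shifted X X' : bead_move X X' ->
  exists q y0, [/\ e q = 0, shifted d e (runner X) q y0,
    ~ shifted d e (runner X) (ord_pred q) y0 &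
    forall p y, shifted d e (runner X') p y <->
      (shifted d e (runner X) p y /\ (p, y) <> (q, y0)) \/ (p, y) = (ord_pred q, y0)].
Proof.
move=> [x [hx [hnx [hres hX']]]].
set q := residue m (x - 1).
set y0 := (((x - 1) %/ m.+1%:Z)%Z + 1) - level_shift d e q.
have ex : x = abacus_pos q (y0 + level_shift d e q).
  by rewrite /y0 subrK {1}(abacus_posE m x).
have ex1 : x - 1 = abacus_pos (ord_pred q) (y0 + level_shift d e (ord_pred q)).
  by rewrite -abacus_pos_pred // -ex.
exists q, y0; split=> //; rewrite /shifted /runner -?ex -?ex1 //.
move=> p y; rewrite hX'; split.
- case=> [[h1 h2]|/esym h].
    by left; split=> // -[hp hy]; apply: h2; rewrite ex hp hy.
  by rewrite ex1 in h; case: (shifted_pos_inj h) => -> ->; right.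
- case=> [[h1 h2]|[-> ->]]; last by right.
  left; split=> // h; apply: h2; rewrite ex in h.
  by case: (shifted_pos_inj h) => -> ->.
Qed.

Lemma class_count_move X X' : bead_move X X' ->
  forall k y, class_count d e (runner X') k y = class_count d e (runner X) k y.
Proof.
move=> hm k y; have [q [y0 [eq0 hq hnq hX']]] := bead_move_shifted hm.
have hqq : ord_pred q != q by apply/eqP => hh; rewrite hh in hnq.
have off p : [&& p != q & p != ord_pred q] || (y != y0) ->
    bP (shifted d e (runner X') p y) = bP (shifted d e (runner X) p y).
  move=> h; apply: bP_iff; rewrite hX'; split.
    by case=> [[]|[hp hy]] //; move: h; rewrite hp hy !eqxx andbF.
  by move=> h'; left; split=> // -[hp hy]; move: h; rewrite hp hy !eqxx.
case: (eqVneq y y0) => hy; last by apply: eq_bigr => p _; rewrite off ?hy ?orbT.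
subst y0; case: (eqVneq k (runner_class d e q)) => hk; last first.
  apply: eq_bigr => p /eqP hp; rewrite off // eqxx orbF.
  by apply/andP; split; apply: contra_neq hk => hpq; rewrite -hp hpq ?runner_class_pred.
rewrite -[RHS]addn0; apply: (big_pair_eq (a := q) (b := ord_pred q)).
- by rewrite eq_sym.
- by rewrite hk.
- by rewrite runner_class_pred ?hk.
- by move=> p _ h1 h2; rewrite off ?h1 ?h2.
have -> : bP (shifted d e (runner X') q y) = false.
  apply/bPP; rewrite hX' => -[[_ hne]|hh]; first exact: hne.
  by case: hh => hh; rewrite -hh eqxx in hqq.
have -> : bP (shifted d e (runner X') (ord_pred q) y) by apply/bPP; rewrite hX'; right.
have -> : bP (shifted d e (runner X) q y) by apply/bPP.
by have -> : bP (shifted d e (runner X) (ord_pred q) y) = false by apply/bPP.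
Qed.

Lemma stable_nested X : ~ bead_movable X -> nested d e (runner X).
Proof.
move=> hst p y ep hp; rewrite /shifted /runner -abacus_pos_pred //.
set x := abacus_pos p (y + level_shift d e p).
case: (excluded_middle_informative (X (x - 1))) => // hn.
by case: hst; exists x; rewrite residue_pos.
Qed.

End BeadMoves.

Section TildeSpecification.

Variables (m d : nat) (e : 'I_m.+1 -> rat).
Hypothesis he : admissible d e.

Definition terms (C : 'I_m.+1 -> nat -> int) (p : 'I_m.+1) (z : int) : Prop :=
  memZ (C p) z.

Lemma multC_class_count C t x : (t <= d)%N ->
  multC d e C t x = class_count d e (terms C) (if t == 0%N then d else t)%:R x.
Proof.
move=> htd; have dn0 := d_neq0 he; rewrite /multC /class_count /shifted.
case: ifP => ht.
  have [t0 td] : (t != 0)%N /\ (t < d)%N by case/andP: ht => h1 h2; rewrite -lt0n h1.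
  rewrite (negbTE t0); apply: eq_big => [p|p /eqP hp].
    rewrite /runner_class; case: (boolP (mpart d e p == 0)) => // h0.
    rewrite (eqP h0) eq_sym pnatr_eq0 (negbTE t0) eqr_nat.
    by apply/esym/negbTE; rewrite neq_ltn td orbT.
  by rewrite /level_shift hp pnatr_eq0 (negbTE t0) addr0.
have -> : (if t == 0%N then d else t) = d.
  case: ifP => // t0; apply/eqP; rewrite eqn_leq htd /=.
  by move: ht; rewrite lt0n t0 /= => /negbT; rewrite -leqNgt.
rewrite [RHS](bigID (fun p => mpart d e p == 0)) /=; congr (_ + _)%N.
  apply: eq_big => [p|p /eqP hp]; last by rewrite /level_shift hp eqxx.
  by rewrite /runner_class; case: (boolP (mpart d e p == 0)) => h0; rewrite ?eqxx ?andbF.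
apply: eq_big => [p|p /eqP hp]; last by rewrite /level_shift hp (negbTE dn0) addr0.
rewrite /runner_class; case: (boolP (mpart d e p == 0)) => h0 /=; last by rewrite andbT.
by rewrite (eqP h0) andbF eq_sym (negbTE dn0).
Qed.

Lemma class_count_of_multC C1 C2 :
  (forall t, (t <= d)%N -> forall x, multC d e C1 t x = multC d e C2 t x) ->
  forall p y, class_count d e (terms C1) (runner_class d e p) y =
              class_count d e (terms C2) (runner_class d e p) y.
Proof.
move=> h p y; have [t [ht ->]] := runner_class_nat he p.
by rewrite -!multC_class_count // h.
Qed.

Lemma tilde_nestedE (S : 'I_m.+1 -> int -> Prop) :
  ((forall p : 'I_m.+1, (p != 0 :> nat) -> e p = 0 ->
      forall x, S p x -> S (ord_pred p) x) /\
   (forall p0 q : 'I_m.+1, (p0 == 0 :> nat) -> (q == m :> nat) -> mpart d e p0 = 0 ->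
      forall x, S p0 (x + 1) -> S q x))
  <-> nested d e S.
Proof.
split.
  move=> [h1 h2] p y ep; rewrite /shifted.
  case: (boolP (p == 0 :> nat)) => hp.
    2: by rewrite (level_shift_pred d ep hp); apply: h1.
  have [-> ->] := level_shift_wrap he ep hp; rewrite addr0 => hs.
  apply: (h2 p) => //; first by rewrite ord_pred_val hp.
  by rewrite (mpart_zero d e hp) ep mulr0.
move=> h; split.
  move=> p hp ep x; have := h p (x - level_shift d e p) ep.
  by rewrite /shifted subrK (level_shift_pred d ep hp) subrK.
move=> p0 q hp0 hq hm x hx.
have ep : e p0 = 0.
  move: hm; rewrite (mpart_zero d e hp0) => /eqP.
  by rewrite mulf_eq0 (negbTE (d_neq0 he)) => /eqP.
have -> : q = ord_pred p0 by apply: ord_inj; rewrite ord_pred_val hp0 (eqP hq).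
have [h1 h2] := level_shift_wrap he ep hp0.
by have := h p0 x ep; rewrite /shifted h1 h2 addr0; apply.
Qed.

End TildeSpecification.

Lemma part_decr lam : is_part lam -> forall i j, (i <= j)%N ->
  (nth 0%N lam j <= nth 0%N lam i)%N.
Proof.
case/andP => hs _ i j hij.
case: (ltnP j (size lam)) => hj; last by rewrite nth_default.
have tr : transitive (fun a b : nat => (b <= a)%N).
  by move=> a b c h1 h2; apply: leq_trans h2 h1.
have rf : reflexive (fun a b : nat => (b <= a)%N) by move=> a; exact: leqnn.
apply: (sorted_leq_nth tr rf 0%N hs) => //; rewrite inE //.
exact: leq_ltn_trans hij hj.
Qed.

Lemma part_nth_gt0 lam k : is_part lam -> (0 < nth 0%N lam k)%N = (k < size lam)%N.
Proof.
case/andP => _ h0; case: (ltnP k (size lam)) => hk; last by rewrite nth_default.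
rewrite lt0n; apply/eqP => hz; move: h0; rewrite -hz mem_nth //.
Qed.

Lemma betar0 lam k : betar 0 lam k = (nth 0%N lam k)%:Z - k%:Z.
Proof. by rewrite /betar addr0. Qed.

Lemma beta_strict lam : is_part lam -> forall i j, (i < j)%N ->
  betar 0 lam j < betar 0 lam i.
Proof.
move=> hp i j hij; rewrite !betar0.
apply: (le_lt_trans (y := (nth 0%N lam i)%:Z - j%:Z)).
  by rewrite lerD2r lez_nat part_decr // ltnW.
by rewrite ltrD2l ltrN2 ltz_nat.
Qed.

Lemma beta_inj lam : is_part lam -> injective (betar 0 lam).
Proof.
move=> hp i j h; case: (ltngtP i j) => // hij; have := beta_strict hp hij.
all: by rewrite h ltxx.
Qed.

Fixpoint part_of (N : nat) (f : nat -> nat) : seq nat :=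
  if N is N'.+1 then
    if f 0%N == 0%N then [::] else f 0%N :: part_of N' (fun i => f i.+1)
  else [::].

Lemma nonincr_le (f : nat -> nat) : (forall i, f i.+1 <= f i)%N ->
  forall i j, (i <= j)%N -> (f j <= f i)%N.
Proof.
move=> hf i j hij; rewrite -(subnK hij).
by elim: (j - i)%N => // k IH; rewrite addSn (leq_trans (hf _)).
Qed.

Lemma part_of_nth N f : (forall i, f i.+1 <= f i)%N -> f N = 0%N ->
  forall k, nth 0%N (part_of N f) k = f k.
Proof.
elim: N f => [|N IH] f hf hN k /=.
  by rewrite nth_nil; apply/esym/eqP; rewrite -leqn0 -hN nonincr_le.
case: ifP => h0; last by case: k => [|k] //=; rewrite IH.
by rewrite nth_nil; apply/esym/eqP; rewrite -leqn0 -(eqP h0) nonincr_le.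
Qed.

Lemma part_of_part N f : (forall i, f i.+1 <= f i)%N -> is_part (part_of N f).
Proof.
move=> hf; apply/andP; split.
  have path_of N' g x : (forall i, g i.+1 <= g i)%N -> (g 0%N <= x)%N ->
      path (fun a b : nat => (b <= a)%N) x (part_of N' g).
    elim: N' g x => [|N' IH] g x hg hx //=; case: ifP => // _ /=.
    by rewrite hx /=; apply: IH => // i; apply: hg.
  exact: path_sorted (path_of N f (f 0%N) hf (leqnn _)).
elim: N f hf => [|N IH] g hg //=; case: ifP => // h0.
by rewrite inE negb_or eq_sym h0 /=; apply: IH => i; apply: hg.
Qed.

Section JSteps.

Variables (m : nat) (e : 'I_m.+1 -> rat).
Local Notation J := [pred j : 'I_m.+1 | e j == 0].

Lemma J_step_row lam mu : J_step J lam mu ->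
  exists a0, [/\ (0 < nth 0%N lam a0)%N, nth 0%N mu a0 = (nth 0%N lam a0).-1,
    forall k, k != a0 -> nth 0%N mu k = nth 0%N lam k &
    e (residue m ((nth 0%N lam a0)%:Z - a0.+1%:Z)) = 0].
Proof.
move=> [_ [[|a0] [b [/and3P [// _ hb hbf] [hc hY]]]]].
set f := nth 0%N lam in hbf *; set g := nth 0%N mu; rewrite /= in hbf.
have row k b' : (0 < b')%N ->
    (b' <= g k)%N <-> (b' <= f k)%N /\ (k, b') <> (a0, b).
  move=> hb'; have := hY k.+1 b'; rewrite /inY /= hb' /= => hh; split.
    by move/hh => [h1 h2]; split=> // -[ek eb]; apply: h2; rewrite ek eb.
  by move=> [h1 h2]; apply/hh; split=> // -[ek eb]; apply: h2; rewrite ek eb.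
have same k : k != a0 -> g k = f k.
  move=> hk; have H b' : (0 < b')%N -> (b' <= g k)%N <-> (b' <= f k)%N.
    move=> hb'; rewrite row //; split=> [[]//|h]; split=> // -[ek _].
    by rewrite ek eqxx in hk.
  apply/eqP; rewrite eqn_leq; apply/andP; split.
    by case: (posnP (g k)) => [->//|hp]; apply/(H _ hp).
  by case: (posnP (f k)) => [->//|hp]; apply/(H _ hp).
have gb : (g a0 < b)%N by rewrite ltnNge; apply/negP => /(row _ _ hb) [_]; apply.
have bf : b = f a0.
  apply/eqP; rewrite eqn_leq hbf /= leqNgt; apply/negP => hlt.
  have hfg : (f a0 <= g a0)%N.
    apply/(row _ _ (leq_ltn_trans (leq0n _) hlt)); split=> // -[eb].
    by rewrite eb ltnn in hlt.
  by have := leq_ltn_trans hfg gb; rewrite ltnNge (ltnW hlt).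
have hf0 : (0 < f a0)%N by rewrite -bf.
exists a0; split=> //.
  apply/eqP; rewrite eqn_leq; apply/andP; split; first by rewrite -ltnS prednK // -bf.
  case: (posnP (f a0).-1) => [->//|hp]; apply/(row _ _ hp); split; first exact: leq_pred.
  by rewrite bf => -[hh]; move: (ltn_predL (f a0)); rewrite hf0 hh ltnn.
case: hc => j [/eqP hj hdiv].
by rewrite -bf (residue_of_dvd hdiv).
Qed.

Lemma beta_row_decrement lam mu a0 : is_part lam -> is_part mu ->
  (0 < nth 0%N lam a0)%N -> nth 0%N mu a0 = (nth 0%N lam a0).-1 ->
  (forall k, k != a0 -> nth 0%N mu k = nth 0%N lam k) ->
  let x := (nth 0%N lam a0)%:Z - a0%:Z in
  [/\ beta_set 0 lam x, ~ beta_set 0 lam (x - 1) &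
      forall z, beta_set 0 mu z <-> (beta_set 0 lam z /\ z <> x) \/ z = x - 1].
Proof.
move=> hl hmu hf0 ga same x.
have bx : betar 0 lam a0 = x by rewrite betar0.
have bmu k : k != a0 -> betar 0 mu k = betar 0 lam k by move=> hk; rewrite !betar0 same.
have bmu0 : betar 0 mu a0 = x - 1 by rewrite betar0 ga predz // /x addrAC.
split; first by exists a0.
- move=> [k hk]; case: (leqP k a0) => hka.
    have : x <= betar 0 lam k.
      rewrite -bx; case: (ltngtP k a0) hka => // [hh|->] _; last by [].
      by apply: ltW; apply: beta_strict.
    by rewrite hk => hh; have := le_lt_trans hh (ltz_sub1 x); rewrite ltxx.
  have h1 : betar 0 lam k <= betar 0 lam a0.+1.
    case: (ltngtP a0.+1 k) hka => // [hh|<-] _; last by [].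
    by apply: ltW; apply: beta_strict.
  have h2 : betar 0 lam a0.+1 < x - 1.
    rewrite -bmu ?neq_ltn ?ltnSn ?orbT // -bmu0; exact: beta_strict.
  by have := le_lt_trans h1 h2; rewrite hk ltxx.
move=> z; split.
  move=> [k <-]; case: (eqVneq k a0) => [->|hka]; first by right.
  left; rewrite bmu //; split; first by exists k.
  by rewrite -bx => /(beta_inj hl) hk; rewrite hk eqxx in hka.
case=> [[[k hk] hne]|->]; last by exists a0.
exists k; rewrite bmu ?hk //; apply/eqP => hka; apply: hne.
by rewrite -hk hka.
Qed.

Lemma J_step_bead_move lam mu : is_part lam -> J_step J lam mu ->
  bead_move e (beta_set 0 lam) (beta_set 0 mu).
Proof.
move=> hl hstep; have hmu : is_part mu by case: hstep.
have [a0 [hf0 ga same he0]] := J_step_row hstep.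
have [hx hnx hz] := beta_row_decrement hl hmu hf0 ga same.
exists ((nth 0%N lam a0)%:Z - a0%:Z); do 3 split=> //.
by rewrite -addrA -opprD -PoszD addn1.
Qed.

Lemma row_decrement mu k : is_part mu ->
  (nth 0%N mu k.+1 < nth 0%N mu k)%N ->
  exists nu, is_part nu /\ forall i,
    nth 0%N nu i = if i == k then (nth 0%N mu k).-1 else nth 0%N mu i.
Proof.
move=> hmu hlt; set g := nth 0%N mu in hlt *.
have hdec := part_decr hmu.
have hks : (k < size mu)%N by rewrite -part_nth_gt0 // (leq_ltn_trans _ hlt).
pose h i := if i == k then (g k).-1 else g i.
have hdh i : (h i.+1 <= h i)%N.
  rewrite /h; case: (eqVneq i.+1 k) => [e1|n1].
    by rewrite -e1 (ltn_eqF (ltnSn i)) (leq_trans (leq_pred _)) // hdec.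
  case: (eqVneq i k) => [->|n2]; last exact: hdec.
  by rewrite -ltnS prednK // (leq_ltn_trans _ hlt).
have hN : h (size mu) = 0%N by rewrite /h (gtn_eqF hks) /g nth_default.
by exists (part_of (size mu) h); split; [exact: part_of_part | exact: part_of_nth].
Qed.

Lemma J_step_of_movable mu : is_part mu ->
  bead_movable e (beta_set 0 mu) -> exists nu, J_step J mu nu.
Proof.
move=> hmu [x [[k hk] [hn he0]]]; set g := nth 0%N mu.
have hk1 : betar 0 mu k.+1 != x - 1 by apply/eqP => hh; apply: hn; exists k.+1.
have hlt : (g k.+1 < g k)%N.
  rewrite ltn_neqAle part_decr // andbT; apply: contra hk1 => /eqP hh.
  by rewrite -hk !betar0 -/g hh -[k.+1]addn1 PoszD opprD addrA.
have hk0 : (0 < g k)%N by apply: leq_ltn_trans hlt.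
have [nu [hnu hnth]] := row_decrement hmu hlt.
exists nu; split=> //; exists k.+1, (g k); split; first by rewrite /inY /= hk0 leqnn.
split.
  exists (residue m (x - 1)); split; first by rewrite inE he0.
  have -> : (g k)%:Z - k.+1%:Z = x - 1.
    by rewrite -hk betar0 -/g -[k.+1]addn1 PoszD opprD addrA.
  exact: residue_dvd.
move=> [|a'] b'; rewrite /inY ?hnth //=; first by split=> //; case.
case: (eqVneq a' k) => [->|ne]; last first.
  by split=> [hh|[]] //; split=> // -[hh']; rewrite hh' eqxx in ne.
split.
  move=> /andP [hb hbk]; split; first by rewrite hb /= (leq_trans hbk (leq_pred _)).
  by case=> hh; move: hbk; rewrite hh -ltnS prednK // ltnn.
case=> /andP [hb hbk] hne; rewrite hb /= -ltnS prednK // ltn_neqAle hbk andbT.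
by apply/eqP => hh; apply: hne; rewrite hh.
Qed.

End JSteps.

Definition bounded (X : int -> Prop) (U L : int) :=
  (forall x, X x -> x <= U) /\ (forall x, x <= L -> X x).

(* The total height above L of the beads of X: it drops by one at each move. *)
Definition bead_weight (X : int -> Prop) (U L : int) : nat :=
  (\sum_(i < `|U - L|%N) bP (X (L + 1 + i%:Z)%R) * i)%N.

Lemma bead_weight_move (X X' : int -> Prop) U L x : bounded X U L ->
  X x -> ~ X (x - 1) -> (forall z, X' z <-> (X z /\ z <> x) \/ z = x - 1) ->
  bead_weight X U L = (bead_weight X' U L).+1.
Proof.
move=> [hU hL] hx hnx hX'.
have hxL : L < x - 1 by rewrite ltNge; apply/negP => /hL.
have h0 : 0 <= x - (L + 1) by rewrite subr_ge0 -lerBrDr ltW.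
set a := absz (x - (L + 1))%R.
have ea : x = L + 1 + a%:Z by rewrite /a gez0_abs // addrC subrK.
have a1 : (0 < a)%N by rewrite -ltz_nat; move: hxL; rewrite ea addrAC addrK ltrDl.
have aN : (a < `|U - L|%N)%N.
  rewrite -ltz_nat gez0_abs; last first.
    by rewrite subr_ge0; apply: le_trans (ltW (lt_trans hxL (ltz_sub1 x))) (hU _ hx).
  by rewrite ltrBrDl; apply: lt_le_trans (hU _ hx); rewrite ea addrAC ltrDl.
have ea1 : x - 1 = L + 1 + (a.-1)%:Z by rewrite predz // ea addrA.
have aN' : (a.-1 < `|U - L|%N)%N by apply: leq_ltn_trans aN; apply: leq_pred.
have hidx (i : nat) : (L + 1 + i%:Z == x) = (i == a).
  by rewrite ea (inj_eq (addrI _)) eqz_nat.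
have hidx1 (i : nat) : (L + 1 + i%:Z == x - 1) = (i == a.-1).
  by rewrite ea1 (inj_eq (addrI _)) eqz_nat.
rewrite /bead_weight -addn1.
apply: (big_pair_eq (a := Ordinal aN) (b := Ordinal aN')) => //.
- by rewrite -val_eqE /= neq_ltn ltn_predL a1 orbT.
- move=> i _; rewrite -!val_eqE /= -hidx -hidx1 => /eqP hia /eqP hib.
  congr (_ * _)%N; congr (nat_of_bool _); apply: bP_iff.
  by rewrite hX'; split=> [hh|[[]|]] //; left.
rewrite /= -ea -ea1.
have -> : bP (X x) by apply/bPP.
have -> : bP (X (x - 1)) = false by apply/bPP.
have -> : bP (X' x) = false.
  by apply/bPP; rewrite hX' => -[[_ []]|hh] //; have := ltz_sub1 x; rewrite -hh ltxx.
have -> : bP (X' (x - 1)) by apply/bPP; rewrite hX'; right.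
by rewrite mul1n mul0n !add0n mul1n addn0 addn1 prednK.
Qed.

Section Sorting.

Variables (m d : nat) (e : 'I_m.+1 -> rat).
Hypothesis he : admissible d e.

Lemma bead_move_bounded X X' U L :
  bounded X U L -> bead_move e X X' -> bounded X' U L.
Proof.
move=> [hU hL] [x [hx [hnx [_ hX']]]]; split=> z; rewrite hX'.
  by case=> [[/hU //]|->]; apply: le_trans (ltW (ltz_sub1 x)) (hU _ hx).
move=> hz; left; split; first exact: hL.
by move=> hzx; apply: hnx; apply: hL; rewrite -hzx (le_trans (ltW (ltz_sub1 z))).
Qed.

(* Moving beads as long as possible terminates (the bead weight drops) in a
   configuration with the same class counts where no bead can move. *)
Lemma stable_exists X U L : bounded X U L ->
  exists Y, [/\ bounded Y U L, ~ bead_movable e Y &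
    forall k y, class_count d e (runner Y) k y = class_count d e (runner X) k y].
Proof.
elim: {X}(bead_weight X U L).+1 {-2}X (ltnSn (bead_weight X U L)) => // n IH X hn hb.
case: (excluded_middle_informative (bead_movable e X)) => hmov; last by exists X.
have [x [hx [hnx he0]]] := hmov.
pose X' z := (X z /\ z <> x) \/ z = x - 1.
have hmv : bead_move e X X' by exists x.
have hw : (bead_weight X' U L < n)%N.
  by rewrite -ltnS -(bead_weight_move hb hx hnx (X' := X')).
have [Y [hbY hstY hcY]] := IH X' hw (bead_move_bounded hb hmv).
by exists Y; split=> // k y; rewrite hcY; exact: class_count_move hmv k y.
Qed.

End Sorting.

Section Enumeration.

Variable P : int -> Prop.
Variables L U : int.
Hypothesis P_low : forall x, x <= L -> P x.
Hypothesis P_up : forall x, P x -> x <= U.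

Fixpoint scan_down (n : nat) (z : int) : int :=
  if n is n'.+1 then (if bP (P (z - 1)) then z - 1 else scan_down n' (z - 1))
  else z - 1.

Lemma scan_down_spec n z : z - 1 - n%:Z <= L ->
  [/\ P (scan_down n z), scan_down n z < z &
      forall w, scan_down n z < w -> w < z -> ~ P w].
Proof.
have gap (w z' : int) : z' - 1 < w -> w < z' -> False.
  by move=> h1 h2; have := ltz_le1 h2; rewrite leNgt h1.
elim: n z => [|n IH] z hz /=.
  by rewrite subr0 in hz; split=> [|| w /gap h /h //]; [exact: P_low | exact: ltz_sub1].
case: (bPP (P (z - 1))) => hp; first by split=> [|| w /gap h /h //] //; exact: ltz_sub1.
have hz' : z - 1 - 1 - n%:Z <= L.
  by move: hz; rewrite -[n.+1]addn1 PoszD opprD addrA addrAC.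
have [h1 h2 h3] := IH _ hz'; split=> //; first exact: lt_trans h2 (ltz_sub1 z).
move=> w hw1 hw2; have := ltz_le1 hw2; rewrite le_eqVlt => /orP [/eqP ->//|hw]; exact: h3.
Qed.

Definition prev_elt (z : int) : int := scan_down `|z - L|%N z.

Lemma prev_elt_spec z : [/\ P (prev_elt z), prev_elt z < z &
  forall w, prev_elt z < w -> w < z -> ~ P w].
Proof.
apply: scan_down_spec; apply: (le_trans (y := z - `|z - L|%N%:Z)).
  by rewrite addrAC gerBl.
by rewrite lerBlDr [L + _]addrC -lerBlDr abszE ler_norm.
Qed.

Fixpoint enum_elt (k : nat) : int :=
  if k is k'.+1 then prev_elt (enum_elt k') else prev_elt (U + 1).

Lemma enum_elt_decr : strictly_decr enum_elt.
Proof. by move=> k /=; case: (prev_elt_spec (enum_elt k)). Qed.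

Lemma enum_eltE x : memZ enum_elt x <-> P x.
Proof.
have hP k : P (enum_elt k).
  case: k => [|k] /=; first by case: (prev_elt_spec (U + 1)).
  by case: (prev_elt_spec (enum_elt k)).
split; first by move=> [k <-].
move=> px.
have step k : x < enum_elt k -> x <= enum_elt k.+1.
  move=> hlt; rewrite leNgt; apply/negP => hh.
  by case: (prev_elt_spec (enum_elt k)) => _ _ h; exact: (h x hh hlt px).
have h0 : x <= enum_elt 0.
  rewrite leNgt; apply/negP => hlt.
  by case: (prev_elt_spec (U + 1)) => _ _ h; apply: (h x) => //; rewrite ltzD1 P_up.
suff : forall n k, x <= enum_elt k -> enum_elt k - x <= n%:Z -> memZ enum_elt x.
  by move=> /(_ `|enum_elt 0 - x|%N 0%N h0); apply; rewrite abszE ler_norm.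
elim=> [|n IH] k hk hn.
  by exists k; apply/eqP; rewrite eq_le hk andbT -subr_le0.
case: (eqVneq (enum_elt k) x) => [e1|ne]; first by exists k.
have hlt : x < enum_elt k by rewrite lt_neqAle eq_sym ne hk.
apply: (IH k.+1 (step k hlt)); rewrite -ltzD1.
have h2 : enum_elt k.+1 - x < enum_elt k - x by rewrite ltrD2r enum_elt_decr.
by apply: lt_le_trans h2 _; rewrite -PoszD addn1.
Qed.

End Enumeration.

Section Bounds.

Variable m : nat.

Lemma abacus_bounded_up (X : int -> Prop) V :
  (forall (q : 'I_m.+1) c, runner X q c -> c <= V) ->
  forall x, X x -> x <= m.+1%:Z * V.
Proof.
move=> h x hx; rewrite (abacus_posE m x) in hx *.
by apply: le_trans (abacus_pos_le _ _) _; rewrite ler_pM2l //; exact: h hx.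
Qed.

Lemma abacus_bounded_lo (X : int -> Prop) W :
  (forall (q : 'I_m.+1) c, c <= W -> runner X q c) ->
  forall x, x <= m.+1%:Z * W -> X x.
Proof.
move=> h x hx; rewrite (abacus_posE m x); apply: h; rewrite lezD1.
rewrite -(ltr_pM2r (x := m.+1%:Z)) //; apply: (le_lt_trans (y := x - 1)).
  by rewrite [leRHS](divz_eq (x - 1) m.+1%:Z) lerDl modz_ge0.
by apply: lt_le_trans (ltz_sub1 x) _; rewrite mulrC.
Qed.

Lemma runner_up (X : int -> Prop) U (p : 'I_m.+1) :
  (forall x, X x -> x <= U) -> forall c, runner X p c -> c <= `|U|%:Z.
Proof.
move=> hU c hc; case: (lerP c 0) => hc0; first exact: le_trans hc0 _.
apply: (le_trans (y := abacus_pos p c)).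
  2: by apply: le_trans (hU _ hc) _; rewrite abszE ler_norm.
have h1 : c - 1 <= m.+1%:Z * (c - 1).
  by apply: ler_peMl; [rewrite subr_ge0 -ltzD1 ltzD1 | rewrite lez_nat].
rewrite /abacus_pos -addrA; apply: (le_trans (y := m.+1%:Z * (c - 1) + 1)).
  by apply: le_trans (lerD h1 (lexx 1)); rewrite subrK.
by rewrite lerD2l lerDr.
Qed.

Lemma runner_lo (X : int -> Prop) L (p : 'I_m.+1) :
  (forall x, x <= L -> X x) -> forall c, c <= - `|L|%:Z -> runner X p c.
Proof.
move=> hL c hc; apply: hL.
have hc0 : c <= 0 by apply: le_trans hc _; rewrite oppr_le0.
apply: le_trans (abacus_pos_le p c) _.
apply: le_trans (ler_neMl hc0 _) _; first by rewrite lez_nat.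
by apply: le_trans hc _; rewrite lerNl abszE -normrN ler_norm.
Qed.

Lemma betar_up r lam k : is_part lam -> betar r lam k <= (nth 0%N lam 0%N)%:Z + r.
Proof.
move=> hp; apply: (le_trans (y := (nth 0%N lam k)%:Z + r)); first by rewrite gerBl.
by rewrite lerD2r lez_nat part_decr.
Qed.

Lemma betar_lo r lam c : c <= r - (size lam)%:Z -> memZ (betar r lam) c.
Proof.
move=> hc; have h0 : 0 <= r - c.
  by rewrite subr_ge0; apply: le_trans hc _; rewrite gerBl.
exists `|r - c|%N; rewrite /betar gez0_abs // nth_default; last first.
  by rewrite -lez_nat gez0_abs // lerBrDr addrC -lerBrDr.
by rewrite add0r opprB addrC subrK.
Qed.

Lemma le_sum_int (F : 'I_m.+1 -> int) q : (forall i, 0 <= F i) -> F q <= \sum_i F i.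
Proof. by move=> h; rewrite (bigD1 q) //= lerDl sumr_ge0. Qed.

Lemma chi_bounded (r : 'I_m.+1 -> int) ws (lam : 'I_m.+1 -> seq nat) :
  (forall p, is_part (lam p)) -> exists U L, bounded (chi (Cseq r ws lam)) U L.
Proof.
move=> hlam.
pose top p := (nth 0%N (lam (word_inv ws p)) 0%N)%:Z + `|r p|%:Z.
pose len p := (size (lam (word_inv ws p)))%:Z + `|r p|%:Z.
exists (m.+1%:Z * \sum_p top p), (m.+1%:Z * - \sum_p len p); split.
  apply: abacus_bounded_up => q c /runner_chi [k <-].
  apply: le_trans (betar_up _ _ (hlam _)) _; apply: (le_trans (y := top q)).
    by rewrite lerD2l abszE ler_norm.
  by apply: le_sum_int => i; rewrite addr_ge0.
apply: abacus_bounded_lo => q c hc; apply/runner_chi; apply: betar_lo.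
apply: le_trans hc _; rewrite lerNl opprB.
apply: le_trans (le_sum_int (F := len) q _); last by move=> i; rewrite addr_ge0.
by rewrite lerD2l abszE -normrN ler_norm.
Qed.

End Bounds.

Section Hearts.

Variables (m d : nat) (e : 'I_m.+1 -> rat).
Hypothesis he : admissible d e.
Local Notation J := [pred j : 'I_m.+1 | e j == 0].

(* C~ exists: sort the beads of the bounded abacus chi(C) until no bead can
   move, then read off its runners as strictly decreasing sequences. *)
Lemma tilde_exists (C : 'I_m.+1 -> nat -> int) :
  (exists U L, bounded (chi C) U L) -> exists Ct, Ctilde_spec d e C Ct.
Proof.
move=> [U [L hb]]; have [Y [[hUY hLY] hstY hcY]] := stable_exists he hb.
pose Ct (p : 'I_m.+1) := enum_elt (runner Y p) (- `|L|%:Z) `|U|%:Z.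
have hCt (p : 'I_m.+1) : strictly_decr (Ct p) /\ forall c, memZ (Ct p) c <-> runner Y p c.
  have lo := runner_lo p hLY; have up := runner_up (p := p) hUY.
  by split; [exact: enum_elt_decr lo | exact: enum_eltE lo up].
exists Ct; split; first by move=> q; case: (hCt q).
split.
  move=> t ht x; rewrite !(multC_class_count he) //.
  rewrite (class_count_ext _ _ (fun p c => proj2 (hCt p) c)).
  by rewrite hcY; apply: class_count_ext => p c; exact: runner_chi.
apply/(tilde_nestedE he) => p y ep; rewrite /shifted !(proj2 (hCt _)).
exact: (stable_nested he hstY ep).
Qed.

Lemma J_heart_stable nu mu : is_part nu -> is_J_heart J nu mu ->
  [/\ ~ bead_movable e (beta_set 0 mu) &
      forall k y, class_count d e (runner (beta_set 0 mu)) k y =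
                  class_count d e (runner (beta_set 0 nu)) k y].
Proof.
move=> hnu [hrt0 hterm]; have hrt := clos_rt_rt1n _ _ _ _ hrt0.
have hmu : is_part mu by elim: hrt hnu => // x y z [hy _] _ IH _; exact: IH.
split; first by move=> /(J_step_of_movable hmu); exact: hterm.
elim: hrt hnu => // x y z hxy _ IH hx k w.
have hy : is_part y by case: hxy.
by rewrite IH // (class_count_move he (J_step_bead_move hx hxy)).
Qed.

Lemma J_heart_tilde C Ct nu mu : Ctilde_spec d e C Ct ->
  is_part nu -> (forall x, beta_set 0 nu x <-> chi C x) -> is_J_heart J nu mu ->
  forall x, beta_set 0 mu x <-> chi Ct x.
Proof.
move=> [_ [hmult hnest]] hnu hB hheart x; rewrite chiE; apply: runnersE x => q c.
have [hst hcount] := J_heart_stable hnu hheart.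
apply: (nested_unique he (stable_nested he hst) (proj1 (tilde_nestedE he _) hnest)).
move=> p y; rewrite hcount (class_count_of_multC he hmult).
by apply: class_count_ext => p' c'; rewrite /terms -runner_chi; exact: hB.
Qed.

End Hearts.

(* With l = m.+1: epsilon is admissible and chi(C(lambda)) is bounded, so C~
   exists; since sum r = 0 the J-heart of tau_r(w(lambda)) has beta-set
   chi(C~). *)
Theorem theorem3p11
  (l n : nat) (hl : (0 < l)%N) (hn : (0 < n)%N)
  (H : 'I_l -> rat) (hH0 : \sum_(i : 'I_l) H i = 0)
  (d : nat) (hd : (0 < d)%N)
  (hdH : forall i : 'I_l, (i != 0 :> nat) -> exists z : int, d%:R * H i = z%:~R)
  (r : 'I_l -> int) (hr : \sum_(i : 'I_l) r i = 0)
  (ws : seq 'I_l) (hws : all (fun i : 'I_l => (0 < i)%N) ws)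
  (heps : forall j : 'I_l, 0 <= eps H r ws j <= 1)
  (lam : 'I_l -> seq nat) (hlam : forall p, is_part (lam p))
  (hlamn : (\sum_(p : 'I_l) sumn (lam p))%N = n) :
  let e := eps H r ws in
  let J := [pred j : 'I_l | e j == 0] in
  (exists Ct, Ctilde_spec d e (Cseq r ws lam) Ct) /\
  (forall Ct : 'I_l -> nat -> int, Ctilde_spec d e (Cseq r ws lam) Ct ->
   forall nu : seq nat, is_part nu ->
   (forall x, beta_set (\sum_(i : 'I_l) r i) nu x <-> chi (Cseq r ws lam) x) ->
   forall mu : seq nat, is_J_heart J nu mu ->
   forall x, beta_set 0 mu x <-> chi Ct x).
Proof.
case: l hl H hH0 hdH r hr ws hws heps lam hlam hlamn => [//|m] _.
move=> H hH0 hdH r hr ws _ heps lam hlam _ e J.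
have he : admissible d e.
  split=> //; [by move=> j; case/andP: (heps j) | exact: sum_eps | exact: int_eps].
split; first by apply: (tilde_exists he); exact: chi_bounded.
move=> Ct hspec nu hnu hB; rewrite hr in hB.
by move=> mu hmu x; apply: (J_heart_tilde he hspec hnu hB hmu).
Qed.
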